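(* Let $B$ and $k$ be positive integers and let $G=(V,E)$ be a graph with $m=|E|$ edges and maximum degree at most $B$. If $G$ has a vertex cover with at most $m/B+k$ vertices, then there exists a set $D\subseteq E$ with $|D|\le kB$ such that the graph $G-D=(V,E\setminus D)$ is bipartite.
   Context: A vertex cover of a graph $G=(V,E)$ is a set $C\subseteq V$ such that every edge of $G$ has at least one endpoint in $C$. *)

From HB Require Import structures.
From mathcomp Require Import all_boot all_order all_algebra.
Set Implicit Arguments. Unset Strict Implicit. Unset Printing Implicit Defensive.

(* A simple graph on the finite vertex type T is given by its edge set
   E : {set {set T}}, where every edge is a 2-element subset of T. *)
Definition simple_graph (T : finType) (E : {set {set T}}) : Prop :=
  forall e, e \in E -> #|e| = 2.

Definition degree (T : finType) (E : {set {set T}}) (v : T) : nat :=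
  #|[set e in E | v \in e]|.

Definition max_degree_le (T : finType) (E : {set {set T}}) (B : nat) : Prop :=
  forall v : T, degree E v <= B.

Definition vertex_cover (T : finType) (E : {set {set T}}) (C : {set T}) : Prop :=
  forall e, e \in E -> exists2 v, v \in e & v \in C.

Definition bipartite (T : finType) (E : {set {set T}}) : Prop :=
  exists col : T -> bool,
    forall e, e \in E -> forall u v, u \in e -> v \in e -> u != v -> col u != col v.

From mathcomp Require Import all_boot all_order all_algebra.
Import Order.TTheory GRing.Theory Num.Theory.
Set Implicit Arguments. Unset Strict Implicit. Unset Printing Implicit Defensive.

(* Let C be a vertex cover with |C| <= m/B + k and let D be the
   set of edges with both endpoints in C.  Colouring every vertex by
   membership in C, every edge outside D has exactly one endpoint in C, so
   E \ D is bipartite.  To bound |D|, double count the incidences between C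
   and E: every edge meets C at least once, and edges of D meet it twice, so
     m + |D| <= sum_(e in E) |e ∩ C| = sum_(v in C) deg v <= |C| B <= m + k B,
   whence |D| <= k B. *)

Section CoverCut.

Variables (T : finType) (E : {set {set T}}).

Definition inner_edges (C : {set T}) : {set {set T}} :=
  [set e in E | e \subset C].

Lemma degree_sum (v : T) : degree E v = \sum_(e in E) (v \in e).
Proof.
by rewrite /degree -sum1dep_card big_mkcondr; apply: eq_bigr => e _; case: (v \in e).
Qed.

Lemma sum_degree_incidences (C : {set T}) :
  \sum_(v in C) degree E v = \sum_(e in E) #|e :&: C|.
Proof.
under eq_bigr => v _ do rewrite degree_sum.
rewrite exchange_big /=; apply: eq_bigr => e _.
rewrite -sum1_card big_mkcond [RHS]big_mkcond /=.
by apply: eq_bigr => v _; rewrite inE; case: (v \in C); case: (v \in e).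
Qed.

Hypothesis simpleE : simple_graph E.

(* Each edge meets a vertex cover, and an inner edge meets it twice. *)
Lemma cover_incidences (C : {set T}) : vertex_cover E C ->
  #|E| + #|inner_edges C| <= \sum_(e in E) #|e :&: C|.
Proof.
move=> coverC.
rewrite /inner_edges -sum1dep_card big_mkcondr -sum1_card -big_split /=.
apply: leq_sum => e eE; case: ifP => [eC | _].
  by rewrite (setIidPl eC) simpleE.
rewrite addn0 card_gt0; apply/set0Pn.
by case: (coverC e eE) => w we wC; exists w; rewrite inE we wC.
Qed.

Lemma edge_pair (e : {set T}) (u v : T) : e \in E ->
  u \in e -> v \in e -> u != v -> e = [set u; v].
Proof.
move=> eE ue ve uv; apply/esym/eqP.
rewrite eqEcard simpleE // cards2 uv leqnn andbT.
by apply/subsetP => x; rewrite !inE => /orP [] /eqP ->.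
Qed.

(* Removing the inner edges of a vertex cover leaves a bipartite graph:
   colour the vertices by membership in the cover. *)
Lemma cover_cut_bipartite (C : {set T}) : vertex_cover E C ->
  bipartite (E :\: inner_edges C).
Proof.
move=> coverC; exists (fun x => x \in C) => e.
rewrite !inE => /andP [not_inner eE] u v ue ve uv.
have e_uv := edge_pair eE ue ve uv.
apply: contra not_inner => /eqP same_side; rewrite eE /= e_uv.
case: (coverC e eE) => w; rewrite e_uv !inE => /orP [] /eqP -> wC.
  by rewrite subUset !sub1set wC -same_side wC.
by rewrite subUset !sub1set wC same_side wC.
Qed.

Hypothesis (B : nat) (degE : max_degree_le E B).

Lemma inner_edges_bound (C : {set T}) : vertex_cover E C ->
  #|E| + #|inner_edges C| <= #|C| * B.
Proof.
move=> coverC; rewrite (leq_trans (cover_incidences coverC)) //.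
rewrite -sum_degree_incidences -sum1_card big_distrl /=.
by apply: leq_sum => v _; rewrite mul1n.
Qed.

End CoverCut.

Lemma cover_size_nat (c m B k : nat) : 0 < B ->
  (c%:R <= m%:R / B%:R + k%:R :> rat)%R -> c * B <= m + k * B.
Proof.
move=> B_gt0 hc; rewrite -(ler_nat rat) natrM natrD natrM.
have := ler_wpM2r (ler0n rat B) hc.
by rewrite mulrDl divfK // pnatr_eq0 -lt0n.
Qed.

Theorem lemma2 (T : finType) (E : {set {set T}}) (B k : nat)
  (hB : (0 < B)%N) (hk : (0 < k)%N)
  (hG : simple_graph E) (hdeg : max_degree_le E B)
  (hC : exists C : {set T}, vertex_cover E C /\
          ((#|C|%:R : rat) <= (#|E|%:R : rat) / (B%:R : rat) + (k%:R : rat))%R) :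
  exists D : {set {set T}}, D \subset E /\ (#|D| <= k * B)%N /\ bipartite (E :\: D).
Proof.
case: hC => C [coverC smallC].
exists (inner_edges E C); split; first by apply/subsetP => e; rewrite inE => /andP [].
split; last exact: cover_cut_bipartite.
rewrite -(leq_add2l #|E|).
exact: leq_trans (inner_edges_bound hG hdeg coverC) (cover_size_nat hB smallC).
Qed.
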